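(* Let $n=m_1m_2$ with $m_1,m_2\geq 2$. Let $A\subseteq\mathbb{Z}_n$, $A_1\subseteq\mathbb{Z}_{m_1}$, $A_2\subseteq\mathbb{Z}_{m_2}$ be nonempty subsets none of which contains $0$. Suppose that for $i=1,2$ we have $f_i(A)\subseteq A_i$, where $f_i:\mathbb{Z}_n\to\mathbb{Z}_{m_i}$ is the natural map. Then $D_A(n)\geq D_{A_1}(m_1)+D_{A_2}(m_2)-1$.
   Context: $\mathbb{Z}_m$ is the integers mod $m$. For nonempty $A\subseteq\mathbb{Z}_m\setminus\{0\}$, a sequence $(x_1,\ldots,x_k)$ in $\mathbb{Z}_m$ is an $A$-weighted zero-sum sequence if there exist $a_1,\ldots,a_k\in A$ with $\sum a_ix_i=0$; $D_A(m)$ is the least positive integer $k$ such that every sequence of length $k$ in $\mathbb{Z}_m$ has a nonempty subsequence which is an $A$-weighted zero-sum sequence. The natural map $\mathbb{Z}_n\to\mathbb{Z}_m$ for $m\mid n$ is $a+n\mathbb{Z}\mapsto a+m\mathbb{Z}$. *)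

From HB Require Import structures.
From mathcomp Require Import all_boot all_order all_algebra.
Set Implicit Arguments. Unset Strict Implicit. Unset Printing Implicit Defensive.
Import GRing.Theory.
Local Open Scope ring_scope.

Definition has_Awzs (m k : nat) (A : {set 'Z_m}) (x : 'I_k -> 'Z_m) : Prop :=
  exists (I : {set 'I_k}) (w : 'I_k -> 'Z_m),
    I != set0 /\ (forall i, i \in I -> w i \in A) /\
    \sum_(i in I) w i * x i = 0.

Definition DA_prop (m : nat) (A : {set 'Z_m}) (k : nat) : Prop :=
  forall x : 'I_k -> 'Z_m, has_Awzs A x.

Definition is_DA (m : nat) (A : {set 'Z_m}) (d : nat) : Prop :=
  (0 < d)%N /\ DA_prop A d /\ (forall k, (0 < k)%N -> DA_prop A k -> (d <= k)%N).

Definition natmap (n m : nat) (x : 'Z_n) : 'Z_m := (nat_of_ord x)%:R.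

From mathcomp Require Import all_boot all_order all_algebra.
From Stdlib Require Import Classical.
From mathcomp Require Import zify.
Set Implicit Arguments. Unset Strict Implicit. Unset Printing Implicit Defensive.
Import GRing.Theory.
Local Open Scope ring_scope.

(* Take zero-sum free sequences x1 in Z_m1 and x2 in Z_m2 of lengths
   D_A1(m1) - 1 and D_A2(m2) - 1, and concatenate m2 * x1 and x2, lifted to
   Z_(m1 m2).  A weighted zero-sum of the result reduces mod m2 to one of x2,
   since the first block vanishes there, so it only uses the first block; there
   it is m2 times a weighted sum of the lift of x1, which therefore vanishes
   mod m1, giving a zero-sum of x1. *)

Section NaturalMap.
Variables m n : nat.
Hypotheses (m_gt1 : (1 < m)%N) (n_gt1 : (1 < n)%N) (m_dvd_n : (m %| n)%N).

Lemma natmap_natr k : natmap m (k%:R : 'Z_n) = k%:R.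
Proof.
by rewrite /natmap val_Zp_nat // -(Zp_nat_mod m_gt1) -[RHS](Zp_nat_mod m_gt1) modn_dvdm.
Qed.

Lemma natmapD (a b : 'Z_n) : natmap m (a + b) = natmap m a + natmap m b.
Proof. by rewrite -[a]natr_Zp -[b]natr_Zp -natrD !natmap_natr natrD. Qed.

Lemma natmapM (a b : 'Z_n) : natmap m (a * b) = natmap m a * natmap m b.
Proof. by rewrite -[a]natr_Zp -[b]natr_Zp -natrM !natmap_natr natrM. Qed.

Lemma natmap_natr_Zp (x : 'Z_m) : natmap m ((x : nat)%:R : 'Z_n) = x.
Proof. by rewrite natmap_natr natr_Zp. Qed.

Lemma natmap_sum (I : finType) (P : pred I) (F : I -> 'Z_n) :
  natmap m (\sum_(i | P i) F i) = \sum_(i | P i) natmap m (F i).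
Proof. exact: (big_morph (natmap m) natmapD). Qed.

End NaturalMap.

(* [k s = 0] in [Z_(mk)] means [mk | k s], i.e. [m | s]. *)
Lemma natmap_eq0_mulr m k (s : 'Z_(m * k)) :
  (1 < m)%N -> (0 < k)%N -> k%:R * s = 0 -> natmap m s = 0.
Proof.
move=> m_gt1 k_gt0 ks0.
have mk_gt1 : (1 < m * k)%N by rewrite (leq_trans m_gt1) // leq_pmulr.
have /(congr1 (@nat_of_ord _)) : (k * s)%:R = 0 :> 'Z_(m * k) by rewrite natrM natr_Zp.
rewrite val_Zp_nat //= => /eqP; rewrite -/(dvdn _ _) (mulnC k) dvdn_pmul2r //.
by case/dvdnP=> q sE; rewrite /natmap sE natrM pchar_Zp // mulr0.
Qed.

Lemma not_has_Awzs_set0 m (B : {set 'Z_m}) k (x : 'I_k -> 'Z_m)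
    (I : {set 'I_k}) (w : 'I_k -> 'Z_m) :
  ~ has_Awzs B x -> (forall i, i \in I -> w i \in B) ->
  \sum_(i in I) w i * x i = 0 -> I = set0.
Proof.
by move=> freex wB sum0; apply/eqP; apply: contra_notT freex => I_neq0; exists I, w.
Qed.

Lemma DA_prop0 m (B : {set 'Z_m}) : ~ DA_prop B 0.
Proof.
move=> /(_ (fun=> 0)) [I [w [I_neq0 _]]].
by case/set0Pn: I_neq0 => -[].
Qed.

Lemma DA_prop_leq m (B : {set 'Z_m}) k l : (k <= l)%N -> DA_prop B k -> DA_prop B l.
Proof.
move=> le_kl DAk z; have [I [w [I_neq0 [wB sum0]]]] := DAk (z \o widen_ord le_kl).
pose w' (j : 'I_l) := if insub (val j) is Some i then w i else 0.
have w'E i : w' (widen_ord le_kl i) = w i by rewrite /w' /= valK.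
exists (widen_ord le_kl @: I), w'; split; first by rewrite imset_eq0.
split; first by move=> _ /imsetP [i iI ->]; rewrite w'E wB.
rewrite big_imset /=; last by move=> i j _ _ /(congr1 val) eq_ij; apply/val_inj.
by rewrite -[RHS]sum0; apply: eq_bigr => i _; rewrite w'E.
Qed.

Lemma is_DA_exists_free m (B : {set 'Z_m}) d :
  is_DA B d -> exists x : 'I_d.-1 -> 'Z_m, ~ has_Awzs B x.
Proof.
move=> [d_gt0 [_ d_min]]; apply: not_all_ex_not => DAd.
have [d0 | d_gt1] := posnP d.-1; first by move: DAd; rewrite d0 => /DA_prop0.
by have := d_min _ d_gt1 DAd; rewrite leqNgt ltn_predL d_gt0.
Qed.

Lemma is_DA_gt_free m (B : {set 'Z_m}) d k (x : 'I_k -> 'Z_m) :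
  is_DA B d -> ~ has_Awzs B x -> (k < d)%N.
Proof.
move=> [_ [DAd _]] freex; rewrite ltnNge; apply/negP => le_dk.
exact: freex (DA_prop_leq le_dk DAd x).
Qed.

Definition cat_seq (T : Type) k1 k2 (x1 : 'I_k1 -> T) (x2 : 'I_k2 -> T)
    (i : 'I_(k1 + k2)) : T :=
  match split i with inl a => x1 a | inr b => x2 b end.

Lemma cat_seq_lshift T k1 k2 (x1 : 'I_k1 -> T) (x2 : 'I_k2 -> T) a :
  cat_seq x1 x2 (lshift k2 a) = x1 a.
Proof. by rewrite /cat_seq (unsplitK (inl a)). Qed.

Lemma cat_seq_rshift T k1 k2 (x1 : 'I_k1 -> T) (x2 : 'I_k2 -> T) b :
  cat_seq x1 x2 (rshift k1 b) = x2 b.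
Proof. by rewrite /cat_seq (unsplitK (inr b)). Qed.

Lemma sum_set_split_ord (V : nmodType) k1 k2 (I : {set 'I_(k1 + k2)})
    (F : 'I_(k1 + k2) -> V) :
  \sum_(i in I) F i = \sum_(a in [set a | lshift k2 a \in I]) F (lshift k2 a)
                    + \sum_(b in [set b | rshift k1 b \in I]) F (rshift k1 b).
Proof.
by rewrite big_split_ord; congr (_ + _); apply: eq_bigl => i; rewrite inE.
Qed.

Section ProductModulus.
Variables (m1 m2 : nat) (A : {set 'Z_(m1 * m2)}) (A1 : {set 'Z_m1}) (A2 : {set 'Z_m2}).
Hypotheses (m1_gt1 : (1 < m1)%N) (m2_gt1 : (1 < m2)%N).
Hypotheses (A_to_A1 : forall a, a \in A -> natmap m1 a \in A1)
           (A_to_A2 : forall a, a \in A -> natmap m2 a \in A2).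

Let n_gt1 : (1 < m1 * m2)%N.
Proof. by rewrite (leq_trans m1_gt1) // leq_pmulr // ltnW. Qed.
Let m1_dvd_n : (m1 %| m1 * m2)%N. Proof. exact: dvdn_mulr. Qed.
Let m2_dvd_n : (m2 %| m1 * m2)%N. Proof. exact: dvdn_mull. Qed.

Definition lift_cat k1 k2 (x1 : 'I_k1 -> 'Z_m1) (x2 : 'I_k2 -> 'Z_m2) :
    'I_(k1 + k2) -> 'Z_(m1 * m2) :=
  cat_seq (fun a => (m2 * x1 a)%:R) (fun b => (x2 b : nat)%:R).

Lemma lift_cat_free k1 k2 (x1 : 'I_k1 -> 'Z_m1) (x2 : 'I_k2 -> 'Z_m2) :
  ~ has_Awzs A1 x1 -> ~ has_Awzs A2 x2 -> ~ has_Awzs A (lift_cat x1 x2).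
Proof.
move=> free1 free2 [I [w [I_neq0 [wA]]]].
rewrite sum_set_split_ord /lift_cat.
under eq_bigr do rewrite cat_seq_lshift.
under [X in _ + X]eq_bigr do rewrite cat_seq_rshift.
set I1 := [set a | _ \in I]; set I2 := [set b | _ \in I] => sum0.
have I2_0 : I2 = set0.
  apply: (not_has_Awzs_set0 (w := fun b => natmap m2 (w (rshift k1 b))) free2).
    by move=> b; rewrite inE => /wA/A_to_A2.
  have block1_0 : natmap m2 (\sum_(a in I1) w (lshift k2 a) * (m2 * x1 a)%:R) = 0.
    rewrite natmap_sum // big1 // => a _.
    by rewrite natmapM // natmap_natr // natrM pchar_Zp // mul0r mulr0.
  move/(congr1 (natmap m2)): sum0; rewrite natmapD // block1_0 add0r natmap_sum //.
  by apply: etrans; apply: eq_bigr => b _; rewrite natmapM // natmap_natr_Zp //.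
have I1_0 : I1 = set0.
  apply: (not_has_Awzs_set0 (w := fun a => natmap m1 (w (lshift k2 a))) free1).
    by move=> a; rewrite inE => /wA/A_to_A1.
  rewrite I2_0 big_set0 addr0 in sum0.
  have /natmap_eq0_mulr : m2%:R * \sum_(a in I1) w (lshift k2 a) * (x1 a : nat)%:R = 0.
    by rewrite mulr_sumr -[RHS]sum0; apply: eq_bigr => a _; rewrite natrM mulrCA.
  move=> /(_ m1_gt1 (ltnW m2_gt1)); rewrite natmap_sum //.
  by under eq_bigr do rewrite natmapM // natmap_natr_Zp //.
case/set0Pn: I_neq0 => i; case: (split_ordP i) => [a|b] -> iI.
  by have := in_set0 a; rewrite -I1_0 inE iI.
by have := in_set0 b; rewrite -I2_0 inE iI.
Qed.

End ProductModulus.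

Theorem lemma1p7 (m1 m2 : nat) (hm1 : (2 <= m1)%N) (hm2 : (2 <= m2)%N)
  (A : {set 'Z_(m1 * m2)}) (A1 : {set 'Z_m1}) (A2 : {set 'Z_m2})
  (hA : A != set0) (hA1 : A1 != set0) (hA2 : A2 != set0)
  (h0A : 0 \notin A) (h0A1 : 0 \notin A1) (h0A2 : 0 \notin A2)
  (hf1 : forall x, x \in A -> natmap m1 x \in A1)
  (hf2 : forall x, x \in A -> natmap m2 x \in A2)
  (d d1 d2 : nat) (hd : is_DA A d) (hd1 : is_DA A1 d1) (hd2 : is_DA A2 d2) :
  (d1 + d2 - 1 <= d)%N.
Proof.
have [x1 free1] := is_DA_exists_free hd1.
have [x2 free2] := is_DA_exists_free hd2.
have := is_DA_gt_free hd (lift_cat_free hm1 hm2 hf1 hf2 free1 free2).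
by case: hd1 hd2 => [d1_gt0 _] [d2_gt0 _]; lia.
Qed.
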